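(* Let $\mathcal{X}\subseteq\mathbb{R}^n$ be a compact set that is comonotone under a permutation mapping $\Psi:\Pi_n\to\Pi_n$. If $\Psi$ is surjective, then $\mathcal{X}$ is standard comonotone.
   Context: $\Pi_n$ is the set of permutations of $[n]$. For $\pi\in\Pi_n$, $\mathcal{Z}(\pi)=\{x\in\mathbb{R}^n: x_{\pi(1)}\ge\cdots\ge x_{\pi(n)}\}$. $\mathcal{X}$ is comonotone under $\Psi$ if for every $\pi\in\Pi_n$ and every $v\in\mathcal{Z}(\pi)$, whenever $\max_{x\in\mathcal{X}}v^\top x$ attains its optimum, it has an optimal solution $x^*\in\mathcal{Z}(\Psi(\pi))$. $\mathcal{X}$ is standard comonotone if it is comonotone under the identity mapping $\Psi(\pi)=\pi$. *)

(* R^n is 'rV[R]_n for R : realType;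
   coordinates indexed by 'I_n (0-based). Pi_n is {perm 'I_n}. *)
From mathcomp Require Import all_boot all_order all_algebra all_fingroup.
From mathcomp Require Import all_classical all_reals all_analysis.
Set Implicit Arguments. Unset Strict Implicit. Unset Printing Implicit Defensive.
Import Order.TTheory GRing.Theory Num.Theory.
Local Open Scope ring_scope.
Local Open Scope classical_set_scope.

Definition dotv (R : realType) (n : nat) (v x : 'rV[R]_n) : R :=
  \sum_(i < n) v ord0 i * x ord0 i.

Definition Zcone (R : realType) (n : nat) (pi : {perm 'I_n}) : set 'rV[R]_n :=
  [set x | forall i j : 'I_n, (i <= j)%N -> x ord0 (pi j) <= x ord0 (pi i)].

Definition is_maximizer (R : realType) (n : nat) (X : set 'rV[R]_n)
  (v x : 'rV[R]_n) : Prop :=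
  X x /\ forall y, X y -> dotv v y <= dotv v x.

Definition comonotone_under (R : realType) (n : nat) (X : set 'rV[R]_n)
  (Psi : {perm 'I_n} -> {perm 'I_n}) : Prop :=
  forall (pi : {perm 'I_n}) (v : 'rV[R]_n), Zcone pi v ->
    (exists x, is_maximizer X v x) ->
    exists xs, is_maximizer X v xs /\ Zcone (Psi pi) xs.

Definition standard_comonotone (R : realType) (n : nat) (X : set 'rV[R]_n) : Prop :=
  comonotone_under X (fun pi => pi).

(** A nonincreasing weight vector [a] can be placed along any ordering [r]
    of the coordinates; call [M r] the optimal value of the resulting linear
    objective over [X].  By the rearrangement inequality, a maximizer in
    [Z (Psi r)] for the objective ordered by [r] scores at least as well
    against the objective ordered by [Psi r], so [M r <= M (Psi r)].  Since
    [Psi] is surjective on the finite set of permutations, it is a bijection,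
    so the two sides have the same sum over all [r] and hence [M] is
    [Psi]-invariant.  For [Psi r = pi] the maximizer supplied for [r] is then
    optimal for the objective ordered by [pi] and lies in [Z pi]. *)
From mathcomp Require Import all_boot all_order all_algebra all_fingroup.
From mathcomp Require Import all_classical all_reals all_analysis.
From mathcomp Require Import ring.
Import numFieldNormedType.Exports.
Set Implicit Arguments. Unset Strict Implicit. Unset Printing Implicit Defensive.
Import Order.TTheory GRing.Theory Num.Theory.
Local Open Scope ring_scope.

Lemma dotv_continuous (R : realType) (n : nat) (w : 'rV[R]_n) :
  continuous (dotv w).
Proof.
apply: continuous_big => [|i _ x]; first exact: add_continuous.
by apply: continuousM; [exact: cst_continuous | exact: coord_continuous].
Qed.

Lemma maximizer_exists (R : realType) (n : nat) (X : set 'rV[R]_n)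
    (w : 'rV[R]_n) :
  compact X -> (exists x, X x) -> exists x, is_maximizer X w x.
Proof.
move=> cX X0.
have [c Xc c_max] :=
  compact_EVT_max X0 cX (continuous_subspaceT (@dotv_continuous R n w)).
by exists c; split=> [|y Xy]; [exact: set_mem | apply: c_max; rewrite inE].
Qed.

Section Rearrangement.
Variables (R : numDomainType) (n : nat) (a y : 'I_n -> R).

Lemma sum_mul_tperm (tau : {perm 'I_n}) (i j : 'I_n) :
  \sum_k a k * y ((tperm i j * tau)%g k) =
  \sum_k a k * y (tau k) + (a j - a i) * (y (tau i) - y (tau j)).
Proof.
have [<-|neq_ij] := eqVneq i j; first by rewrite tperm1 mul1g subrr mul0r addr0.
rewrite (bigD1 i) // (bigD1 j) 1?eq_sym //= [in RHS](bigD1 i) //.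
rewrite [in RHS](bigD1 j) 1?eq_sym //= !permM tpermL tpermR.
rewrite (eq_bigr (fun k => a k * y (tau k))) => [|k /andP[ki kj]]; last first.
  by rewrite permM tpermD // eq_sym.
ring.
Qed.

Hypotheses (a_noninc : forall i j : 'I_n, (i <= j)%N -> a j <= a i)
  (y_noninc : forall i j : 'I_n, (i <= j)%N -> y j <= y i).

(* Induction on a bound [m] above which [tau] is the identity: swapping [m]
   with its preimage [j] fixes [m] and cannot decrease the sum, because
   [j <= m] and [tau m <= m]. *)
Lemma rearrangement (tau : {perm 'I_n}) :
  \sum_k a k * y (tau k) <= \sum_k a k * y k.
Proof.
suff: forall m (tau : {perm 'I_n}), (forall k : 'I_n, (m <= k)%N -> tau k = k) ->
    \sum_k a k * y (tau k) <= \sum_k a k * y k.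
  by move/(_ n tau); apply=> k; rewrite leqNgt ltn_ord.
elim=> [|m IH] {}tau fix_tau.
  by rewrite (eq_bigr (fun k => a k * y k)) // => k _; rewrite fix_tau.
have [n_le_m|m_lt_n] := leqP n m.
  by apply: IH => k m_le_k; have := leq_trans n_le_m m_le_k; rewrite leqNgt ltn_ord.
pose om := Ordinal m_lt_n; pose j := (tau^-1)%g om.
have j_le_m : (j <= m)%N.
  rewrite leqNgt; apply/negP => m_lt_j; have := fix_tau _ m_lt_j.
  by rewrite permKV => om_j; rewrite -om_j ltnn in m_lt_j.
have tau_om_le_m : (tau om <= m)%N.
  rewrite leqNgt; apply/negP => m_lt_tau; have /perm_inj tau_om := fix_tau _ m_lt_tau.
  by rewrite tau_om ltnn in m_lt_tau.
apply: le_trans (IH (tperm om j * tau)%g _).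
  rewrite sum_mul_tperm permKV lerDl.
  by apply: mulr_ge0; rewrite subr_ge0; [exact: a_noninc | exact: y_noninc].
move=> k m_le_k; rewrite permM.
have [->|k_neq_om] := eqVneq k om; first by rewrite tpermL permKV.
have m_lt_k : (m < k)%N by rewrite ltn_neqAle m_le_k andbT eq_sym.
rewrite tpermD ?fix_tau //; first by rewrite eq_sym.
by apply: contra_ltnN m_lt_k => /eqP <-.
Qed.

End Rearrangement.

Lemma le_comp_surj_eq (R : numDomainType) (T : finType) (f : T -> T)
    (M : T -> R) :
  (forall t, exists s, f s = t) -> (forall t, M t <= M (f t)) ->
  forall t, M (f t) = M t.
Proof.
move=> f_surj M_le t; have [g fgK] := choice f_surj.
have sum_diff : \sum_s (M (f s) - M s) = 0.
  rewrite sumrB (reindex_inj (can_inj fgK)) /=.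
  by under eq_bigr do rewrite fgK; rewrite subrr.
by apply/eqP; rewrite -subr_eq0 (psumr_eq0P _ sum_diff) // => s _; rewrite subr_ge0.
Qed.

Section ArrangedRow.
Variables (R : realType) (n : nat) (a : 'I_n -> R).

Definition arranged_row (r : {perm 'I_n}) : 'rV[R]_n := \row_i a ((r^-1)%g i).

Lemma dotv_arranged_row (r : {perm 'I_n}) (x : 'rV[R]_n) :
  dotv (arranged_row r) x = \sum_k a k * x ord0 (r k).
Proof.
rewrite /dotv (reindex_inj (@perm_inj _ r)).
by apply: eq_bigr => k _; rewrite mxE permK.
Qed.

Hypothesis a_noninc : forall i j : 'I_n, (i <= j)%N -> a j <= a i.

Lemma arranged_row_Zcone (r : {perm 'I_n}) : Zcone r (arranged_row r).
Proof. by move=> i j le_ij; rewrite !mxE !permK; exact: a_noninc. Qed.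

Lemma dotv_arranged_row_le (r s : {perm 'I_n}) (x : 'rV[R]_n) :
  Zcone s x -> dotv (arranged_row r) x <= dotv (arranged_row s) x.
Proof.
move=> xs; rewrite !dotv_arranged_row.
have := rearrangement a_noninc xs (r * s^-1)%g.
by under eq_bigr do rewrite permM permKV.
Qed.

End ArrangedRow.

Theorem theorem1 (R : realType) (n : nat) (X : set 'rV[R]_n)
  (Psi : {perm 'I_n} -> {perm 'I_n}) :
  compact X -> comonotone_under X Psi ->
  (forall sigma : {perm 'I_n}, exists pi, Psi pi = sigma) ->
  standard_comonotone X.
Proof.
move=> cX Psi_com Psi_surj pi v v_pi [x0 [X_x0 _]].
pose a k := v ord0 (pi k); pose w := arranged_row a.
have a_noninc : forall i j : 'I_n, (i <= j)%N -> a j <= a i by exact: v_pi.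
have w_pi : w pi = v by apply/rowP => i; rewrite mxE /a permKV.
have /choice [xs xs_max] : forall r, exists x, is_maximizer X (w r) x /\ Zcone (Psi r) x.
  move=> r; apply: Psi_com; first exact: arranged_row_Zcone.
  by apply: maximizer_exists => //; exists x0.
pose M r := dotv (w r) (xs r).
have M_le_cross r : M r <= dotv (w (Psi r)) (xs r).
  exact: dotv_arranged_row_le (xs_max r).2.
have cross_le_M r : dotv (w (Psi r)) (xs r) <= M (Psi r).
  exact: (xs_max (Psi r)).1.2 _ (xs_max r).1.1.
have M_Psi := le_comp_surj_eq Psi_surj (fun r => le_trans (M_le_cross r) (cross_le_M r)).
have [r Psi_r] := Psi_surj pi.
exists (xs r); split; last by rewrite -Psi_r; exact: (xs_max r).2.
split=> [|z Xz]; first exact: (xs_max r).1.1.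
rewrite -w_pi -Psi_r (le_trans ((xs_max (Psi r)).1.2 z Xz)) //.
by rewrite -/(M (Psi r)) M_Psi.
Qed.
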